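(* Let $T \ge 1$ and let $Q_0, \ldots, Q_T$ be real matrices with $Q_t \in \mathbb R^{p_t \times n_x}$, such that the row space of $Q_t$ contains the row space of $Q_{t+1}$ for $t = 0, \ldots, T-1$. For vectors $\rho_{t+1|0} \in \mathbb R^{p_{t+1}}$, $t = 0, \ldots, T-1$, define $\rho_{t|1} := (Q_t')^+ Q_{t+1}' \rho_{t+1|0}$ for $t = 0,\ldots,T-1$ and $$\pi_5 := \frac14 \sum_{t=0}^{T-1} \big(|\rho_{t+1|0}|^2 - |\rho_{t|1}|^2\big).$$ Then $\pi_5 \ge 0$ for all $\rho_{1|0}, \ldots, \rho_{T|0}$ if and only if $\|Q_{t+1} Q_t^+\| \le 1$ for $t = 0, \ldots, T-1$.
   Context: For a matrix $M$, $M'$ is its transpose, $M^+$ its Moore–Penrose pseudoinverse, and $\|M\|$ its maximum singular value. $|\cdot|$ is the Euclidean norm. *)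

From HB Require Import structures.
From mathcomp Require Import all_boot all_order all_algebra.
From mathcomp Require Import classical_sets reals.
Set Implicit Arguments. Unset Strict Implicit. Unset Printing Implicit Defensive.
Import Order.TTheory GRing.Theory Num.Theory.
Local Open Scope ring_scope.
Local Open Scope classical_set_scope.

Definition vnorm {R : realType} {n : nat} (v : 'cV[R]_n) : R :=
  Num.sqrt (\sum_(i < n) v i ord0 ^+ 2).

Definition penrose {R : realType} {m n : nat} (A : 'M[R]_(m, n)) (X : 'M[R]_(n, m)) : Prop :=
  [/\ A *m X *m A = A, X *m A *m X = X,
      (A *m X)^T = A *m X & (X *m A)^T = X *m A].

(* Moore-Penrose pseudoinverse (exists and is unique; chosen classically) *)
Definition pinv {R : realType} {m n : nat} (A : 'M[R]_(m, n)) : 'M[R]_(n, m) :=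
  xget 0 [set X | penrose A X].

(* Spectral norm (maximum singular value) = operator norm induced by the
   Euclidean norm: sup { |M x| : |x| <= 1 } *)
Definition opnorm {R : realType} {m n : nat} (M : 'M[R]_(m, n)) : R :=
  sup [set vnorm (M *m x) | x in [set x : 'cV[R]_n | vnorm x <= 1]].

(* Since [pinv Q_t^T = (pinv Q_t)^T], the t-th summand of pi_5 is
   [|rho|^2 - |M_t^T rho|^2] with [M_t = Q_(t+1) Q_t^+] and [rho = rho_(t+1|0)].
   The summands depend on distinct variables, so pi_5 >= 0 for all rho iff every
   [M_t^T] is a contraction.  A matrix is a contraction iff its transpose is
   (take [x = M^T y] in [2 <y, M x> <= |y|^2 + |M x|^2]), and iff its
   operator norm is at most 1. *)

From HB Require Import structures.
From mathcomp Require Import all_boot all_order all_algebra.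
From mathcomp Require Import boolp classical_sets reals.
From mathcomp Require Import lra.
Set Implicit Arguments. Unset Strict Implicit.
Import Order.TTheory GRing.Theory Num.Theory.
Local Open Scope ring_scope.

Section Separable.
Variables (R : numDomainType) (V : nat -> Type) (z : forall t, V t).
Variable f : forall t, V t -> R.
Hypothesis f_z : forall t, f (z t) = 0.

Definition single t (v : V t) s : V s :=
  if t =P s is ReflectT e then eq_rect t V v s e else z s.

Lemma single_id t (v : V t) : single v t = v.
Proof. by rewrite /single; case: eqP => // e; rewrite (eq_axiomK e). Qed.

Lemma single_neq t (v : V t) s : t != s -> single v s = z s.
Proof. by rewrite /single; case: eqP. Qed.

Lemma sumr_ge0_separableP T :
  (forall x : forall t, V t, 0 <= \sum_(t < T) f (x t)) <->
  (forall t, (t < T)%N -> forall v : V t, 0 <= f v).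
Proof.
split=> [sum_ge0 t ltT v | term_ge0 x].
  have := sum_ge0 (single v).
  rewrite (bigD1 (Ordinal ltT)) //= single_id big1 ?addr0 //.
  by move=> s neq_s; rewrite single_neq ?f_z // eq_sym.
by apply: sumr_ge0 => t _; apply: term_ge0.
Qed.

End Separable.

Section VectorNorm.
Variable R : realType.

Lemma vnorm_ge0 n (v : 'cV[R]_n) : 0 <= vnorm v.
Proof. exact: sqrtr_ge0. Qed.

Lemma vnorm0 n : vnorm (0 : 'cV[R]_n) = 0.
Proof. by rewrite /vnorm big1 ?sqrtr0 // => i _; rewrite mxE expr0n. Qed.

Lemma sqr_vnorm n (v : 'cV[R]_n) : vnorm v ^+ 2 = \sum_(i < n) v i ord0 ^+ 2.
Proof. by rewrite sqr_sqrtr // sumr_ge0 // => i _; apply: sqr_ge0. Qed.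

Lemma sqr_vnorm_mulmx n (v : 'cV[R]_n) : vnorm v ^+ 2 = (v^T *m v) ord0 ord0.
Proof. by rewrite sqr_vnorm mxE; apply: eq_bigr => i _; rewrite mxE expr2. Qed.

Lemma ler_vnorm m n (a : 'cV[R]_m) (b : 'cV[R]_n) :
  (vnorm a <= vnorm b) = (vnorm a ^+ 2 <= vnorm b ^+ 2).
Proof. by rewrite ler_sqr ?nnegrE ?vnorm_ge0. Qed.

Lemma vnormZ n (c : R) (v : 'cV[R]_n) : vnorm (c *: v) = `|c| * vnorm v.
Proof.
rewrite /vnorm -sqrtr_sqr -sqrtrM ?sqr_ge0 // mulr_sumr.
by congr Num.sqrt; apply: eq_bigr => i _; rewrite mxE exprMn.
Qed.

Lemma vnorm_eq0 n (v : 'cV[R]_n) : vnorm v = 0 -> v = 0.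
Proof.
move=> /eqP; rewrite sqrtr_eq0 => sum_le0; apply/matrixP => i j.
rewrite (ord1 j) mxE; apply/eqP; rewrite -sqrf_eq0 eq_le sqr_ge0 andbT.
apply: le_trans sum_le0; rewrite (bigD1 i) //= lerDl.
by apply: sumr_ge0 => k _; apply: sqr_ge0.
Qed.

Lemma norm_entry_le_vnorm n (v : 'cV[R]_n) i : `|v i ord0| <= vnorm v.
Proof.
rewrite -ler_sqr ?nnegrE ?vnorm_ge0 // real_normK ?num_real // sqr_vnorm.
by rewrite (bigD1 i) //= lerDl; apply: sumr_ge0 => k _; apply: sqr_ge0.
Qed.

Lemma mulmx_dot_le n (a b : 'cV[R]_n) :
  2 * (a^T *m b) ord0 ord0 <= vnorm a ^+ 2 + vnorm b ^+ 2.
Proof.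
rewrite !sqr_vnorm mxE mulr_sumr -big_split; apply: ler_sum => i _ /=.
by rewrite mxE; have := sqr_ge0 (a i ord0 - b i ord0); lra.
Qed.

End VectorNorm.

Section Contraction.
Variable R : realType.

Definition contraction m n (M : 'M[R]_(m, n)) :=
  forall x, vnorm (M *m x) <= vnorm x.

Lemma contraction_trmx m n (M : 'M[R]_(m, n)) : contraction M -> contraction M^T.
Proof.
move=> contrM y; set x := M^T *m y.
have x_dot : vnorm x ^+ 2 = (y^T *m (M *m x)) ord0 ord0.
  by rewrite sqr_vnorm_mulmx {1}/x trmx_mul trmxK !mulmxA.
have := mulmx_dot_le y (M *m x); have := contrM x.
by rewrite !ler_vnorm x_dot; lra.
Qed.

Lemma contraction_trmxP m n (M : 'M[R]_(m, n)) : contraction M^T <-> contraction M.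
Proof. by split=> [/contraction_trmx | /contraction_trmx]; rewrite ?trmxK. Qed.

Lemma vnorm_mulmx_ubound m n (M : 'M[R]_(m, n)) :
  exists C, forall x, vnorm x <= 1 -> vnorm (M *m x) <= C.
Proof.
exists (Num.sqrt (\sum_(i < m) (\sum_(j < n) `|M i j|) ^+ 2)) => x x_le1.
rewrite /vnorm ler_sqrt; last by apply: sumr_ge0 => i _; apply: sqr_ge0.
apply: ler_sum => i _; rewrite -real_normK ?num_real //.
rewrite lerXn2r ?nnegrE ?sumr_ge0 // mxE; apply: le_trans (ler_norm_sum _ _ _) _.
apply: ler_sum => j _; rewrite normrM ler_piMr //.
exact: le_trans (norm_entry_le_vnorm _ _) x_le1.
Qed.

Lemma opnorm_le1P m n (M : 'M[R]_(m, n)) : opnorm M <= 1 <-> contraction M.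
Proof.
split=> [opnorm_le1 x | contrM].
- have [->|x_neq0] := eqVneq x 0; first by rewrite mulmx0 !vnorm0.
  have x_gt0 : 0 < vnorm x.
    rewrite lt_neqAle vnorm_ge0 andbT eq_sym.
    by apply: contra_neq x_neq0; apply: vnorm_eq0.
  have [C ubC] := vnorm_mulmx_ubound M.
  have : vnorm (M *m ((vnorm x)^-1 *: x)) <= 1.
    apply: le_trans opnorm_le1; apply: ub_le_sup.
      by exists C => _ [w w_le1 <-]; apply: ubC.
    exists ((vnorm x)^-1 *: x) => //=.
    by rewrite vnormZ ger0_norm ?invr_ge0 ?vnorm_ge0 ?mulVf ?gt_eqF.
  rewrite -scalemxAr vnormZ ger0_norm ?invr_ge0 ?vnorm_ge0 //.
  by rewrite ler_pdivrMl // mulr1.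
- apply: ge_sup; first by exists (vnorm (M *m 0)), 0 => //; rewrite /= vnorm0.
  by move=> _ [x x_le1 <-]; apply: le_trans x_le1.
Qed.

End Contraction.

Section Pseudoinverse.
Variable R : realType.

Lemma penrose_trmx m n (A : 'M[R]_(m, n)) X : penrose A X -> penrose A^T X^T.
Proof.
case=> AXA XAX AX_sym XA_sym; split.
- by rewrite -!trmx_mul mulmxA AXA.
- by rewrite -!trmx_mul mulmxA XAX.
- by rewrite -trmx_mul XA_sym.
- by rewrite -trmx_mul AX_sym.
Qed.

Lemma penrose_uniq m n (A : 'M[R]_(m, n)) X Y :
  penrose A X -> penrose A Y -> X = Y.
Proof.
case=> AXA XAX AX_sym XA_sym [AYA YAY AY_sym YA_sym].
have X_XAY : X = X *m A *m Y.
  have A_AAY : A^T = A^T *m (A *m Y) by rewrite -AY_sym -trmx_mul AYA.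
  rewrite -{1}XAX -mulmxA -AX_sym trmx_mul A_AAY.
  by rewrite (mulmxA X^T) -trmx_mul AX_sym !mulmxA XAX.
have Y_XAY : Y = X *m A *m Y.
  have A_XAA : A^T = (X *m A) *m A^T by rewrite -XA_sym -trmx_mul mulmxA AXA.
  rewrite -{1}YAY -YA_sym trmx_mul A_XAA.
  by rewrite -(mulmxA (X *m A) A^T Y^T) -trmx_mul YA_sym -(mulmxA (X *m A)) YAY.
by rewrite X_XAY -Y_XAY.
Qed.

(* Existence of the pseudoinverse is not needed: if [A] has none, neither has
   [A^T], and both sides are the default value [0]. *)
Lemma pinv_trmx m n (A : 'M[R]_(m, n)) : pinv A^T = (pinv A)^T.
Proof.
rewrite /pinv; have [[X AX]|noX] := pselect (exists X, penrose A X).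
  apply: penrose_uniq (penrose_trmx (xgetPex 0 (ex_intro _ X AX))).
  by apply: (xgetPex 0); exists X^T; apply: penrose_trmx.
rewrite !xgetPN ?trmx0 // => [X AX|Y ATY]; apply: noX; first by exists X.
by exists Y^T; have := penrose_trmx ATY; rewrite trmxK.
Qed.

Lemma sqr_vnorm_gap_ge0P a b nx (A : 'M[R]_(a, nx)) (B : 'M[R]_(b, nx)) :
  (forall r, 0 <= vnorm r ^+ 2 - vnorm (pinv A^T *m B^T *m r) ^+ 2) <->
  opnorm (B *m pinv A) <= 1.
Proof.
have pinv_trmx_mulmx r : pinv A^T *m B^T *m r = (B *m pinv A)^T *m r.
  by rewrite trmx_mul pinv_trmx.
split=> [gap_ge0 | /opnorm_le1P/contraction_trmxP contrM r].
  apply/opnorm_le1P/contraction_trmxP => r.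
  by rewrite ler_vnorm -pinv_trmx_mulmx -subr_ge0.
by rewrite subr_ge0 pinv_trmx_mulmx -ler_vnorm.
Qed.

End Pseudoinverse.

Theorem proposition2 (R : realType) (T nx : nat) (p : nat -> nat)
  (Q : forall t : nat, 'M[R]_(p t, nx)) :
  (1 <= T)%N ->
  (forall t : nat, (t < T)%N -> (Q t.+1 <= Q t)%MS) ->
  ((forall rho : forall t : nat, 'cV[R]_(p t),
      0 <= 4^-1 * \sum_(t < T)
             (vnorm (rho t.+1) ^+ 2
              - vnorm (pinv (Q t)^T *m (Q t.+1)^T *m rho t.+1) ^+ 2))
   <-> (forall t : nat, (t < T)%N -> opnorm (Q t.+1 *m pinv (Q t)) <= 1)).
Proof.
move=> _ _.
pose gap t (r : 'cV[R]_(p t.+1)) :=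
  vnorm r ^+ 2 - vnorm (pinv (Q t)^T *m (Q t.+1)^T *m r) ^+ 2.
have gap0 t : gap t 0 = 0 by rewrite /gap mulmx0 !vnorm0 expr0n subrr.
have [sum_gap_ge0 gap_ge0] := sumr_ge0_separableP gap0 T.
split=> [pi5_ge0 t ltT | opnorm_le1 rho].
  apply/sqr_vnorm_gap_ge0P/sum_gap_ge0 => // x.
  have := pi5_ge0 (fun s => if s is s'.+1 then x s' else 0).
  by rewrite pmulr_rge0 // invr_gt0 ltr0n.
rewrite mulr_ge0 ?invr_ge0 ?ler0n //.
apply: (gap_ge0 _ (fun t => rho t.+1)) => t ltT.
exact/sqr_vnorm_gap_ge0P/opnorm_le1.
Qed.
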